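(* Let $\varepsilon_1>0$. For a dataset $D=\{(x_i,y_i)\}_{i=1}^n$ with $x_i,y_i\in[0,1]$, let $S_{x^2}=\sum_i x_i^2$, $S_{x-x^2}=\sum_i (x_i-x_i^2)$, $S_{1-x}=\sum_i(1-x_i)$, and let $Z_{11},Z_{12},Z_{13}$ be i.i.d. $\mathrm{Lap}(1/\varepsilon_1)$ random variables. Then the randomized mechanism releasing $(\tilde S_{x^2},\tilde S_{x-x^2},\tilde S_{1-x})=(S_{x^2}+Z_{11},\,S_{x-x^2}+Z_{12},\,S_{1-x}+Z_{13})$ satisfies $\varepsilon_1$-differential privacy.
   Context: $\mathrm{Lap}(b)$ denotes the zero-mean Laplace distribution with density $\frac{1}{2b}e^{-|z|/b}$. Two datasets are neighboring ($D\sim D'$) if one is obtained from the other by adding or removing a single record in $[0,1]^2$. A randomized mechanism $\mathcal{M}$ satisfies $\varepsilon$-differential privacy (pure DP) if for all neighboring $D\sim D'$ and all measurable sets $S$ of outputs, $\Pr[\mathcal{M}(D)\in S]\le e^{\varepsilon}\Pr[\mathcal{M}(D')\in S]$. *)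

From HB Require Import structures.
From mathcomp Require Import all_boot all_order all_algebra.
From mathcomp Require Import all_classical all_reals all_analysis.
Set Implicit Arguments. Unset Strict Implicit. Unset Printing Implicit Defensive.
Import Order.TTheory GRing.Theory Num.Theory.
Local Open Scope ring_scope.
Local Open Scope classical_set_scope.

(* A record is a pair (x, y); a dataset is a finite list of records,
   considered up to permutation (a multiset). *)
Definition record (R : realType) := (R * R)%type.
Definition dataset (R : realType) := seq (record R).

Definition in_unit_square (R : realType) (r : record R) : bool :=
  (0 <= r.1 <= 1) && (0 <= r.2 <= 1).

Definition valid_dataset (R : realType) (D : dataset R) : Prop :=
  all (@in_unit_square R) D.

Definition add_one (R : realType) (D D' : dataset R) : Prop :=
  exists r : record R, in_unit_square r /\ perm_eq D' (r :: D).

Definition neighboring (R : realType) (D D' : dataset R) : Prop :=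
  valid_dataset D /\ valid_dataset D' /\ (add_one D D' \/ add_one D' D).

Definition S_x2 (R : realType) (D : dataset R) : R := \sum_(r <- D) r.1 ^+ 2.
Definition S_x_x2 (R : realType) (D : dataset R) : R := \sum_(r <- D) (r.1 - r.1 ^+ 2).
Definition S_1_x (R : realType) (D : dataset R) : R := \sum_(r <- D) (1 - r.1).

Definition lap_pdf (R : realType) (b z : R) : R := (2 * b)^-1 * expR (- `|z| / b).

Definition leb3 (R : realType) :=
  ((@lebesgue_measure R \x @lebesgue_measure R) \x @lebesgue_measure R)%E.

(* Output law of the mechanism M(D) = (S_x2 D + Z11, S_x_x2 D + Z12, S_1_x D + Z13)
   with Z11, Z12, Z13 i.i.d. Lap(1/eps1): its joint density is the product of the
   three shifted Laplace densities. *)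
Definition mech_prob (R : realType) (eps1 : R) (D : dataset R)
    (S : set ((R * R) * R)) : \bar R :=
  (\int[@leb3 R]_(z in S)
     (lap_pdf (1 / eps1) (z.1.1 - S_x2 D) *
      lap_pdf (1 / eps1) (z.1.2 - S_x_x2 D) *
      lap_pdf (1 / eps1) (z.2 - S_1_x D))%:E)%E.

Definition pure_DP (R : realType) (eps : R)
    (P : dataset R -> set ((R * R) * R) -> \bar R) : Prop :=
  forall D D' : dataset R, neighboring D D' ->
  forall S : set ((R * R) * R), measurable S ->
    (P D S <= (expR eps)%:E * P D' S)%E.

(* The output density is a product of three Laplace densities of scale
   [1/eps1] centred at the three statistics, and moving the centre of such a
   density by [d] changes it by a factor at most [exp(eps1 |d|)] (triangle
   inequality).  Adding a record [(x, y)] moves the statistics by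
   [x^2], [x - x^2] and [1 - x], all nonnegative for [x] in [[0,1]], with sum
   exactly [1]: the L1 sensitivity is [1].  Hence the densities of neighbouring
   datasets differ pointwise by a factor at most [exp eps1], and integrating
   over [S] gives the claim. *)
From HB Require Import structures.
From mathcomp Require Import all_boot all_order all_algebra.
From mathcomp Require Import all_classical all_reals all_analysis.
From mathcomp Require Import measurable_realfun.
From mathcomp Require Import ring lra.
Import Order.TTheory GRing.Theory Num.Theory.
Local Open Scope ring_scope.

Section Laplace.
Context {R : realType}.

Lemma lap_pdf_ge0 (b z : R) : 0 <= b -> 0 <= lap_pdf b z.
Proof. by move=> b0; rewrite /lap_pdf mulr_ge0 ?expR_ge0 // invr_ge0 mulr_ge0. Qed.

Lemma measurable_lap_pdf_shift (b s : R) :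
  measurable_fun setT (fun t : R => lap_pdf b (t - s)).
Proof.
apply: measurable_funM => //; apply: measurableT_comp => //.
apply: measurable_funM => //; apply: measurableT_comp => //.
apply: measurableT_comp => //; exact: measurable_funB.
Qed.

Lemma lap_pdf_shift (b s s' z : R) : 0 <= b ->
  lap_pdf b (z - s) <= expR (`|s - s'| / b) * lap_pdf b (z - s').
Proof.
move=> b0; rewrite /lap_pdf [leRHS]mulrCA ler_wpM2l ?invr_ge0 ?mulr_ge0 //.
rewrite -expRD ler_expR -mulrDl ler_wpM2r ?invr_ge0 //.
have := ler_normD (z - s) (s - s'); rewrite addrA subrK; lra.
Qed.

End Laplace.

Section ProductDensity.
Context {R : realType}.
Implicit Types (b : R) (m n z : (R * R) * R).

Definition lap3_pdf b m z : R :=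
  lap_pdf b (z.1.1 - m.1.1) * lap_pdf b (z.1.2 - m.1.2) * lap_pdf b (z.2 - m.2).

Definition l1_dist m n : R :=
  `|m.1.1 - n.1.1| + `|m.1.2 - n.1.2| + `|m.2 - n.2|.

Lemma l1_distC m n : l1_dist m n = l1_dist n m.
Proof. by rewrite /l1_dist distrC [`|m.1.2 - _|]distrC [`|m.2 - _|]distrC. Qed.

Lemma lap3_pdf_ge0 b m z : 0 <= b -> 0 <= lap3_pdf b m z.
Proof. by move=> b0; apply: mulr_ge0; [apply: mulr_ge0|]; exact: lap_pdf_ge0. Qed.

Lemma measurable_lap3_pdf b m : measurable_fun setT (lap3_pdf b m).
Proof.
rewrite /lap3_pdf; apply: measurable_funM; first apply: measurable_funM.
- apply: (measurableT_comp (measurable_lap_pdf_shift _ _)).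
  exact: (measurableT_comp measurable_fst measurable_fst).
- apply: (measurableT_comp (measurable_lap_pdf_shift _ _)).
  exact: (measurableT_comp measurable_snd measurable_fst).
- exact: (measurableT_comp (measurable_lap_pdf_shift _ _) measurable_snd).
Qed.

Lemma lap3_pdf_shift b m n z : 0 <= b ->
  lap3_pdf b m z <= expR (l1_dist m n / b) * lap3_pdf b n z.
Proof.
move=> b0.
have -> : expR (l1_dist m n / b) * lap3_pdf b n z =
    expR (`|m.1.1 - n.1.1| / b) * lap_pdf b (z.1.1 - n.1.1) *
    (expR (`|m.1.2 - n.1.2| / b) * lap_pdf b (z.1.2 - n.1.2)) *
    (expR (`|m.2 - n.2| / b) * lap_pdf b (z.2 - n.2)).
  by rewrite /l1_dist /lap3_pdf !mulrDl !expRD; ring.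
have l0 t : 0 <= lap_pdf b t by exact: lap_pdf_ge0.
rewrite /lap3_pdf; apply: ler_pM; rewrite ?lap_pdf_shift //; first exact: mulr_ge0.
by apply: ler_pM; rewrite ?lap_pdf_shift.
Qed.

End ProductDensity.

Section Sensitivity.
Context {R : realType}.

Definition stats (D : dataset R) : (R * R) * R := (S_x2 D, S_x_x2 D, S_1_x D).

Lemma stats_add_one (D D' : dataset R) (r : record R) : perm_eq D' (r :: D) ->
  stats D' = (r.1 ^+ 2 + S_x2 D, r.1 - r.1 ^+ 2 + S_x_x2 D, 1 - r.1 + S_1_x D).
Proof. by move=> pD; rewrite /stats /S_x2 /S_x_x2 /S_1_x !(perm_big _ pD) !big_cons. Qed.

Lemma l1_dist_stats_add_one (D D' : dataset R) :
  add_one D D' -> l1_dist (stats D) (stats D') = 1.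
Proof.
case=> r [/andP[/andP[x0 x1] _] /stats_add_one ->].
have xx2 : 0 <= r.1 - r.1 ^+ 2 by rewrite subr_ge0 expr2 ler_piMr.
have x1' : 0 <= 1 - r.1 by rewrite subr_ge0.
have sub_addl (a c : R) : a - (c + a) = - c by rewrite opprD addrCA subrr addr0.
rewrite /l1_dist /= !sub_addl !normrN !ger0_norm ?sqr_ge0 //.
by ring.
Qed.

Lemma l1_dist_stats_neighboring (D D' : dataset R) :
  neighboring D D' -> l1_dist (stats D) (stats D') = 1.
Proof.
case=> _ [_ [/l1_dist_stats_add_one //|/l1_dist_stats_add_one]].
by rewrite l1_distC.
Qed.

End Sensitivity.

Lemma ge0_le_integral_scale {d} {T : measurableType d} {R : realType}
    (mu : {measure set T -> \bar R}) (S : set T) (f g : T -> R) (k : R) :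
  measurable S -> 0 <= k ->
  measurable_fun S f -> measurable_fun S g ->
  (forall x, S x -> 0 <= f x) -> (forall x, S x -> 0 <= g x) ->
  (forall x, S x -> f x <= k * g x) ->
  (\int[mu]_(x in S) (f x)%:E <= k%:E * \int[mu]_(x in S) (g x)%:E)%E.
Proof.
move=> mS k0 mf mg f0 g0 fkg.
rewrite -ge0_integralZl_EFin //; last exact/measurable_EFinP.
apply: ge0_le_integral => //; first exact/measurable_EFinP.
exact/measurable_funeM/measurable_EFinP.
Qed.

Theorem mainTheorem3 (R : realType) (eps1 : R) (heps1 : 0 < eps1) :
  pure_DP eps1 (@mech_prob R eps1).
Proof.
move=> D D' nDD' S mS.
have b0 : 0 <= 1 / eps1 by rewrite divr_ge0 ?ltW.
have mlap3 m : measurable_fun S (lap3_pdf (1 / eps1) m).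
  exact: measurable_funS (subsetT S) (measurable_lap3_pdf _ m).
have pdf_ratio z :
    lap3_pdf (1 / eps1) (stats D) z <= expR eps1 * lap3_pdf (1 / eps1) (stats D') z.
  have := lap3_pdf_shift _ (stats D) (stats D') z b0.
  have inv_scale : 1 / (1 / eps1) = eps1 by rewrite div1r invf_div divr1.
  by rewrite l1_dist_stats_neighboring // inv_scale.
apply: (ge0_le_integral_scale (@leb3 R) S
          (lap3_pdf (1 / eps1) (stats D)) (lap3_pdf (1 / eps1) (stats D'))) => //.
- exact: mlap3.
- exact: mlap3.
- by move=> z _; apply: lap3_pdf_ge0.
- by move=> z _; apply: lap3_pdf_ge0.
Qed.
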